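(* Let $\mathcal{R}$ be a field and $(\mathcal{C}^{\bullet},\partial)$ a bigraded cochain complex of $\mathcal{R}$-vector spaces as in the context. Then there are vector space isomorphisms \[ B^{1}(\mathcal{C},\partial)\cong B^{1}(\mathcal{N}_{0},\overline{\partial})\oplus B^{1}(\mathcal{C}^{0,\bullet},\partial_{0,1}),\qquad Z^{1}(\mathcal{C},\partial)\cong Z^{1}(\mathcal{N}_{0},\overline{\partial})\oplus\ker(\rho_{1}), \] \[ H^{1}(\mathcal{C},\partial)\cong H^{1}(\mathcal{N}_{0},\overline{\partial})\oplus\frac{\ker(\rho_{1})}{B^{1}(\mathcal{C}^{0,\bullet},\partial_{0,1})}. \]
   Context: Setting: $\mathcal{C}^{k}=\bigoplus_{p+q=k}\mathcal{C}^{p,q}$ with $\mathcal{C}^{p,q}=\{0\}$ if $p<0$ or $q<0$; $\partial$ is linear of degree $1$, $\partial^{2}=0$, $\partial=\partial_{2,-1}+\partial_{1,0}+\partial_{0,1}$ with $\partial_{i,j}(\mathcal{C}^{p,q})\subseteq\mathcal{C}^{p+i,q+j}$. For $\eta\in\mathcal{C}^k$, $\eta_{p,q}$ is its $\mathcal{C}^{p,q}$-component; $\pi_{1}:\mathcal{C}\to\bigoplus_{j\geq1}\mathcal{C}^{i,j}$ is the projection along the bigrading. $(\mathcal{C}^{0,\bullet},\partial_{0,1})$ is a cochain complex. $\mathcal{N}_{0}:=\bigoplus_{p}\ker(\partial_{0,1}:\mathcal{C}^{p,0}\to\mathcal{C}^{p,1})$ (degree $p$ part in $\mathcal{C}^{p,0}$)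 is a subcomplex of $(\mathcal{C},\partial)$ with differential $\overline\partial:=\partial|_{\mathcal{N}_0}=\partial_{1,0}|_{\mathcal{N}_0}$. $\mathcal{A}^{k}:=\{\pi_{1}(\eta)\mid\eta\in\mathcal{C}^{k},\ \pi_{1}(\partial\eta)=0\}$; for $\xi\in\mathcal{A}^{k}$ and any $\eta\in\mathcal{C}^{k}$ with $\pi_{1}\eta=\xi$, $\pi_{1}(\partial\eta)=0$, the element $\partial_{2,-1}\xi_{k-1,1}+\partial_{1,0}\eta_{k,0}$ is a cocycle of $(\mathcal{N}_{0},\overline\partial)$ whose class depends only on $\xi$, defining the linear map $\rho_{k}:\mathcal{A}^{k}\to H^{k+1}(\mathcal{N}_{0},\overline{\partial})$. *)

From HB Require Import structures.
From mathcomp Require Import all_boot all_algebra.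
Set Implicit Arguments. Unset Strict Implicit. Unset Printing Implicit Defensive.
Import GRing.Theory.
Local Open Scope ring_scope.

(* [subquot_iso A1 B1 A2 B2] : the subquotient A1/B1 (B1 <= A1 <= V) is     *)
(* isomorphic, as an R-vector space, to A2/B2 (B2 <= A2 <= W).  It asserts  *)
(* the existence of an R-linear map f : A1 -> A2 (given as a function on V  *)
(* that is linear on A1) inducing a bijection A1/B1 -> A2/B2:              *)
(*  - for x in A1, f x lies in B2 iff x lies in B1 (well defined+injective); *)
(*  - every y in A2 is f x + u with x in A1, u in B2 (surjective).          *)
(* With B1 = B2 = {0} this is a plain linear isomorphism A1 ~= A2.          *)
Definition subquot_iso (R : fieldType) (V W : lmodType R)
  (A1 B1 : V -> Prop) (A2 B2 : W -> Prop) : Prop :=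
  exists f : V -> W,
    [/\ (forall (a : R) (x y : V), A1 x -> A1 y -> f (a *: x + y) = a *: f x + f y),
        (forall x, A1 x -> A2 (f x)),
        (forall x, A1 x -> (B2 (f x) <-> B1 x)) &
        (forall y, A2 y -> exists2 x, A1 x & exists2 u, B2 u & y = f x + u)].

Definition zero_sub (R : fieldType) (V : lmodType R) : V -> Prop :=
  fun x => x = 0.

Definition dsum_sub (R : fieldType) (U V : lmodType R)
  (P : U -> Prop) (Q : V -> Prop) : (U * V)%type -> Prop :=
  fun z => P z.1 /\ Q z.2.

(* Over a field, a complement of ker g inside a subspace B extends, by Zorn's
   lemma, to a complement of ker g inside any subspace A containing B;
   inverting g on it gives a linear section of g over A which is also one over
   B.  Apply this to the projection (a, b) |-> b on Z^1(C) and on its subspace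
   B^1(C).  Its kernels are Z^1(N_0) and B^1(N_0) (as a |-> (a, 0)), its images
   are ker rho_1 (a primitive of rho_1(xi) in N_0 can be absorbed into eta) and
   B^1(C^{0,.}).  For such a compatible section s, the map
   z |-> (z.1 - (s z.2).1, z.2) is an isomorphism onto kernel (+) image both on
   Z^1(C) and on B^1(C), hence also induces the isomorphism on H^1. *)

From HB Require Import structures.
From mathcomp Require Import all_boot all_algebra.
From mathcomp Require Import boolp classical_sets.
Import GRing.Theory.
Set Implicit Arguments. Unset Strict Implicit. Unset Printing Implicit Defensive.
Local Open Scope classical_set_scope.
Local Open Scope ring_scope.

Section Subspaces.
Variable R : fieldType.

Definition subspace (V : lmodType R) (A : set V) :=
  A 0 /\ forall a x y, A x -> A y -> A (a *: x + y).

Definition linear_on (V W : lmodType R) (A : set V) (f : V -> W) :=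
  forall a x y, A x -> A y -> f (a *: x + y) = a *: f x + f y.

Definition linear_section (V W : lmodType R) (g : V -> W) (A : set V)
    (s : W -> V) :=
  linear_on (g @` A) s /\ forall y, (g @` A) y -> A (s y) /\ g (s y) = y.

Section SubspaceTheory.
Variables (V : lmodType R) (A : set V).
Hypothesis Asub : subspace A.

Lemma subspaceZ a x : A x -> A (a *: x).
Proof. by case: Asub => A0 Acl Ax; rewrite -[_ *: x]addr0; apply: Acl. Qed.

Lemma subspaceD x y : A x -> A y -> A (x + y).
Proof. by case: Asub => _ Acl Ax Ay; rewrite -[x]scale1r; apply: Acl. Qed.

Lemma subspaceB x y : A x -> A y -> A (x - y).
Proof. by move=> Ax Ay; rewrite -scaleN1r; apply/subspaceD/subspaceZ. Qed.

End SubspaceTheory.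

Lemma subspace0 (V : lmodType R) : subspace [set 0 : V].
Proof. by split=> // a x y -> ->; rewrite scaler0 addr0. Qed.

Lemma subspace_ker (V W : lmodType R) (g : {linear V -> W}) :
  subspace [set x | g x = 0].
Proof.
by split=> [|a x y /= gx gy]; rewrite /= ?linear0 // linearP gx gy scaler0 addr0.
Qed.

Lemma linear_on0 (V W : lmodType R) (A : set V) (f : V -> W) :
  A 0 -> linear_on A f -> f 0 = 0.
Proof.
move=> A0 fA; have := fA 1 0 0 A0 A0; rewrite !scale1r addr0 => f0D.
by apply: (addrI (f 0)); rewrite addr0 -f0D.
Qed.

Section Complement.
Variables (V : lmodType R) (K P A : set V).
Hypotheses (Ksub : subspace K) (Psub : subspace P) (Asub : subspace A).
Hypotheses (PA : P `<=` A) (PK : forall x, P x -> K x -> x = 0).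

(* The guard [E !=set0 -> P `<=` E] lets [set0], the union of the empty
   chain, into the family to which Zorn's lemma is applied. *)
Let partial_complement (E : set V) :=
  [/\ forall a x y, E x -> E y -> E (a *: x + y), E `<=` A,
      (forall x, E x -> K x -> x = 0) & E !=set0 -> P `<=` E].

Let ex_maximal_partial_complement : exists E, partial_complement E /\
  forall F, E `<` F -> ~ partial_complement F.
Proof.
apply: Zorn_bigcup => F FP Ftot; split.
- move=> a x y [X FX Xx] [Y FY Yy].
  have [XY|YX] := Ftot _ _ FX FY.
  + by exists Y => //; case: (FP _ FY) => Ycl _ _ _; apply: Ycl => //; apply: XY.
  + by exists X => //; case: (FP _ FX) => Xcl _ _ _; apply: Xcl => //; apply: YX.
- by move=> x [X FX Xx]; case: (FP _ FX) => _ XA _ _; apply: XA.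
- by move=> x [X FX Xx]; case: (FP _ FX) => _ _ XK _; apply: XK.
- move=> [x [X FX Xx]] y Py; case: (FP _ FX) => _ _ _ PX.
  by exists X => //; apply: PX => //; exists x.
Qed.

Let adjoin (E : set V) (x : V) : set V := [set y | exists t, E (y - t *: x)].

Let adjoin_partial_complement E x : subspace E -> partial_complement E ->
  A x -> ~ (exists2 e, E e & K (x - e)) ->
  partial_complement (adjoin E x) /\ E `<` adjoin E x.
Proof.
move=> Esub [_ EA EK EP] Ax xEK.
have EadjE : E `<=` adjoin E x by move=> y Ey; exists 0; rewrite scale0r subr0.
split; last first.
  split=> // /(_ x) Ex; apply: xEK; exists x; last by rewrite subrr; case: Ksub.
  by apply: Ex; exists 1; rewrite scale1r subrr; case: Esub.
split.
- move=> a y1 y2 [t1 E1] [t2 E2]; exists (a * t1 + t2).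
  rewrite scalerDl -scalerA opprD addrACA -scalerBr.
  by case: Esub => _; apply.
- move=> y [t Et]; rewrite -(subrK (t *: x) y).
  by apply: subspaceD => //; [apply: EA | apply: subspaceZ].
- move=> y [t Et] Ky; have [t0|tN0] := eqVneq t 0.
    by apply: EK => //; move: Et; rewrite t0 scale0r subr0.
  exfalso; apply: xEK; exists ((- t^-1) *: (y - t *: x)).
    exact: subspaceZ.
  rewrite scalerBr scalerA mulNr mulVf // scaleN1r opprK scaleNr opprD opprK addrC subrK.
  exact: subspaceZ.
- by move=> _; apply: subset_trans EadjE; apply: EP; exists 0; case: Esub.
Qed.

Lemma ex_complement : exists E, [/\ subspace E, P `<=` E, E `<=` A,
  (forall x, E x -> K x -> x = 0) & forall x, A x -> exists2 e, E e & K (x - e)].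
Proof.
have [E [[Ecl EA EK EP] Emax]] := ex_maximal_partial_complement.
have PE : P `<=` E.
  apply: EP; apply: contrapT => E0; apply: (Emax P).
    split; first by move=> y Ey; case: E0; exists y.
    by move=> PE; case: E0; exists 0; apply: PE; case: Psub.
  by case: Psub => _ Pcl; split=> // _ y.
have Esub : subspace E by split=> //; apply: PE; case: Psub.
have Epartial : partial_complement E by [].
exists E; split=> // x Ax; apply: contrapT => xEK.
have [adj_partial ltEadj] := adjoin_partial_complement Esub Epartial Ax xEK.
exact: Emax ltEadj adj_partial.
Qed.

End Complement.

Section LinearSections.
Variables (V W : lmodType R) (g : {linear V -> W}).

Definition section_of (E : set V) (y : W) : V :=
  xget 0 [set e | E e /\ g e = y].

Lemma section_ofK E : subspace E -> (forall e, E e -> g e = 0 -> e = 0) ->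
  forall e, E e -> section_of E (g e) = e.
Proof.
move=> Esub Einj e Ee; have ex_e : exists e', E e' /\ g e' = g e by exists e.
have [Ex gx] := xgetPex 0 ex_e; apply/eqP; rewrite -subr_eq0; apply/eqP.
by apply: Einj; [apply: subspaceB | rewrite linearB /= gx subrr].
Qed.

Lemma section_of_linear_section A E F :
    subspace E -> (forall e, E e -> g e = 0 -> e = 0) ->
    subspace F -> F `<=` E -> F `<=` A ->
    (forall x, A x -> exists2 e, F e & g (x - e) = 0) ->
  linear_section g A (section_of E).
Proof.
move=> Esub Einj Fsub FE FA AFK; have sK := section_ofK Esub Einj.
have imgA y : (g @` A) y -> exists2 e, F e & y = g e.
  case=> x Ax <-{y}; have [e Fe gxe] := AFK x Ax.
  by exists e => //; apply/eqP; rewrite -subr_eq0 -linearB gxe.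
split=> [a y1 y2 /imgA[e1 Fe1 ->] /imgA[e2 Fe2 ->]|y /imgA[e Fe ->]].
  have Fe12 : F (a *: e1 + e2) by case: Fsub => _; apply.
  by rewrite -linearP !sK //; apply: FE.
by rewrite sK //; [split=> //; apply: FA | apply: FE].
Qed.

Lemma ex_linear_section B A : subspace B -> subspace A -> B `<=` A ->
  exists s, linear_section g A s /\ linear_section g B s.
Proof.
move=> Bsub Asub BA; have Ksub := subspace_ker g.
have zeroB : [set 0] `<=` B by move=> _ ->; case: Bsub.
have [EB [EBsub _ EBB EBK EBspan]] :=
  ex_complement Ksub (subspace0 V) Bsub zeroB (fun x x0 _ => x0).
have [E [Esub EBE EA EK Espan]] :=
  ex_complement Ksub EBsub Asub (subset_trans EBB BA) EBK.
exists (section_of E); split.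
  exact: (section_of_linear_section Esub EK Esub (@subset_refl _ E) EA Espan).
exact: (section_of_linear_section Esub EK EBsub EBE EBB EBspan).
Qed.

End LinearSections.

Definition ker_snd (U : Type) (V : lmodType R) (X : set (U * V)) : set U :=
  [set a | X (a, 0)].

Section Untwist.
Variables (V1 V2 : lmodType R) (Z : set (V1 * V2)) (s : V2 -> V1 * V2).
Hypotheses (Zsub : subspace Z) (sZ : linear_section snd Z s).

Definition untwist (z : V1 * V2) : V1 * V2 := (z.1 - (s z.2).1, z.2).

Lemma untwist_decomp z : Z z -> z = ((untwist z).1, 0) + s z.2.
Proof.
move=> Zz; have [_ /(_ z.2)[|_]] := sZ; first by exists z.
case: z Zz => a b _ /=; case: (s b) => a' b' /= ->.
by apply/pair_equal_spec; rewrite /= subrK add0r.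
Qed.

Lemma ker_snd_untwist X z : subspace X -> Z z -> X z -> X (s z.2) ->
  ker_snd X (untwist z).1.
Proof.
move=> Xsub Zz Xz Xs; change (X ((untwist z).1, 0)).
by rewrite -[(_, 0)](addrK (s z.2)) -untwist_decomp //; apply: subspaceB.
Qed.

Lemma untwist_linear_on : linear_on Z untwist.
Proof.
move=> a x y Zx Zy; have [s_lin _] := sZ.
rewrite /untwist /= s_lin; [|by exists x | by exists y].
by apply/pair_equal_spec; split=> //=; rewrite scalerBr opprD addrACA.
Qed.

Lemma untwist_into z : Z z -> dsum_sub (ker_snd Z) (snd @` Z) (untwist z).
Proof.
move=> Zz; split; last by exists z.
have [_ /(_ z.2)[|Zs _]] := sZ; first by exists z.
exact: ker_snd_untwist.
Qed.

Lemma untwist_onto w :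
  dsum_sub (ker_snd Z) (snd @` Z) w -> exists2 z, Z z & untwist z = w.
Proof.
case: w => a b [/= Za0 Zb]; have [_ /(_ b Zb)[Zs sb]] := sZ.
exists ((a, 0) + s b); first exact: subspaceD.
by rewrite /untwist /= sb add0r addrK.
Qed.

Lemma untwist_eq0 z : Z z -> untwist z = 0 <-> z = 0.
Proof.
have s0 : s 0 = 0.
  by case: sZ => s_lin _; apply: linear_on0 s_lin; exists 0; case: Zsub.
move=> Zz; split=> [z0|->]; last by rewrite /untwist /= s0 subrr.
by rewrite (untwist_decomp Zz) z0 /=; case: z z0 {Zz} => a b [_ ->]; rewrite s0 addr0.
Qed.

Lemma dsum_sub_untwist B z : subspace B -> linear_section snd B s -> Z z ->
  dsum_sub (ker_snd B) (snd @` B) (untwist z) <-> B z.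
Proof.
move=> Bsub [_ sB] Zz; split=> [[Ba0 /sB[Bs _]]|Bz].
  by rewrite (untwist_decomp Zz); apply: subspaceD.
have [Bs _] := sB z.2 (ex_intro2 _ _ z Bz erefl).
by split; [apply: ker_snd_untwist | exists z].
Qed.

Lemma subquot_iso_untwist :
  subquot_iso Z (@zero_sub R _) (dsum_sub (ker_snd Z) (snd @` Z)) (@zero_sub R _).
Proof.
exists untwist; split.
- exact: untwist_linear_on.
- exact: untwist_into.
- exact: untwist_eq0.
- move=> w /untwist_onto[z Zz <-]; exists z => //.
  by exists 0; rewrite ?addr0.
Qed.

Lemma subquot_iso_dsum_sub_untwist B : subspace B -> linear_section snd B s ->
  subquot_iso Z B (dsum_sub (ker_snd Z) (snd @` Z))
    (dsum_sub (ker_snd B) (snd @` B)).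
Proof.
move=> Bsub sB; exists untwist; split.
- exact: untwist_linear_on.
- exact: untwist_into.
- by move=> z Zz; apply: dsum_sub_untwist.
- move=> w /untwist_onto[z Zz <-]; exists z => //.
  have B0 : B 0 by case: Bsub.
  by exists 0; [split; [|exists 0] | rewrite addr0].
Qed.

End Untwist.

End Subspaces.

Section DegreeOne.
Variables (R : fieldType) (C : nat -> nat -> lmodType R).
Variables (d21 : forall p q, {linear C p q.+1 -> C p.+2 q})
  (d10 : forall p q, {linear C p q -> C p.+1 q})
  (d01 : forall p q, {linear C p q -> C p q.+1}).

Definition tot_Z1 : set (C 1%N 0%N * C 0%N 1%N) := fun z =>
  [/\ d10 1%N 0%N z.1 + d21 0%N 0%N z.2 = 0,
      d01 1%N 0%N z.1 + d10 0%N 1%N z.2 = 0 &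
      d01 0%N 1%N z.2 = 0].

Definition tot_B1 : set (C 1%N 0%N * C 0%N 1%N) := fun z =>
  exists x : C 0%N 0%N, z = (d10 0%N 0%N x, d01 0%N 0%N x).

Definition N0_Z1 : set (C 1%N 0%N) := fun y =>
  d01 1%N 0%N y = 0 /\ d10 1%N 0%N y = 0.

Definition N0_B1 : set (C 1%N 0%N) := fun y =>
  exists2 x : C 0%N 0%N, d01 0%N 0%N x = 0 & y = d10 0%N 0%N x.

Definition N0_B2 : set (C 2%N 0%N) := fun y =>
  exists2 x : C 1%N 0%N, d01 1%N 0%N x = 0 & y = d10 1%N 0%N x.

Definition C0_B1 : set (C 0%N 1%N) := fun y =>
  exists x : C 0%N 0%N, y = d01 0%N 0%N x.

Definition ker_rho1 : set (C 0%N 1%N) := fun xi =>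
  exists eta10 : C 1%N 0%N,
    [/\ d01 1%N 0%N eta10 + d10 0%N 1%N xi = 0,
        d01 0%N 1%N xi = 0 &
        N0_B2 (d21 0%N 0%N xi + d10 1%N 0%N eta10)].

Lemma tot_Z1_subspace : subspace tot_Z1.
Proof.
split; first by split; rewrite /= !linear0 ?addr0.
move=> a [x1 x2] [y1 y2] [ex1 ex2 ex3] [ey1 ey2 ey3]; split=> /=.
- by rewrite !linearP addrACA -scalerDr ex1 ey1 scaler0 addr0.
- by rewrite !linearP addrACA -scalerDr ex2 ey2 scaler0 addr0.
- by rewrite linearP ex3 ey3 scaler0 addr0.
Qed.

Lemma tot_B1_subspace : subspace tot_B1.
Proof.
split=> [|a _ _ [x ->] [y ->]]; first by exists 0; rewrite !linear0.
by exists (a *: x + y); rewrite !linearP.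
Qed.

Lemma tot_B1_sub_Z1
    (h02 : forall p q (x : C p q), d01 p q.+1 (d01 p q x) = 0)
    (h11 : forall p q (x : C p q),
      d10 p q.+1 (d01 p q x) + d01 p.+1 q (d10 p q x) = 0)
    (h20_0 : forall p (x : C p 0%N),
      d21 p 0%N (d01 p 0%N x) + d10 p.+1 0%N (d10 p 0%N x) = 0) :
  tot_B1 `<=` tot_Z1.
Proof.
move=> _ [x ->]; split=> /=; last exact: h02.
  by rewrite addrC; apply: h20_0.
by rewrite addrC; apply: h11.
Qed.

Lemma N0_Z1E : N0_Z1 = ker_snd tot_Z1.
Proof.
apply/seteqP; split=> a; rewrite /ker_snd /tot_Z1 /N0_Z1 /= !linear0 !addr0.
  by case=> -> ->.
by case=> -> ->.
Qed.

Lemma N0_B1E : N0_B1 = ker_snd tot_B1.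
Proof.
apply/seteqP; split=> a /=.
  by case=> x x0 ->; exists x; rewrite x0.
by case=> x [-> x0]; exists x.
Qed.

Lemma C0_B1E : C0_B1 = snd @` tot_B1.
Proof.
apply/seteqP; split=> b.
  by case=> x ->; exists (d10 0%N 0%N x, d01 0%N 0%N x) => //; exists x.
by case=> _ [x ->] <-; exists x.
Qed.

Lemma ker_rho1E : ker_rho1 = snd @` tot_Z1.
Proof.
apply/seteqP; split=> b.
  case=> eta [e1 e2 [x x0 ex]]; exists (eta - x, b) => //; split=> /=.
  - by rewrite linearB addrAC [d10 _ _ eta + _]addrC ex subrr.
  - by rewrite linearB x0 subr0.
  - by [].
case=> -[a b'] [/= e1 e2 e3] <-; exists a; split=> //.
by exists 0; rewrite ?linear0 // addrC.
Qed.

End DegreeOne.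

(* The hypotheses h02 ... h4m2 are the bihomogeneous components of          *)
(* (d21 + d10 + d01)^2 = 0.  Degree-1 total cochains are pairs              *)
(* (a, b) in C^{1,0} x C^{0,1}.                                             *)
Theorem corollary5p4 (R : fieldType) (C : nat -> nat -> lmodType R)
  (d21 : forall p q, {linear C p q.+1 -> C p.+2 q})
  (d10 : forall p q, {linear C p q -> C p.+1 q})
  (d01 : forall p q, {linear C p q -> C p q.+1})
  (h02 : forall p q (x : C p q), d01 p q.+1 (d01 p q x) = 0)
  (h11 : forall p q (x : C p q),
      d10 p q.+1 (d01 p q x) + d01 p.+1 q (d10 p q x) = 0)
  (h20_0 : forall p (x : C p 0%N),
      d21 p 0%N (d01 p 0%N x) + d10 p.+1 0%N (d10 p 0%N x) = 0)
  (h20 : forall p q (x : C p q.+1),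
      d21 p q.+1 (d01 p q.+1 x) + d10 p.+1 q.+1 (d10 p q.+1 x)
        + d01 p.+2 q (d21 p q x) = 0)
  (h3m1 : forall p q (x : C p q.+1),
      d21 p.+1 q (d10 p q.+1 x) + d10 p.+2 q (d21 p q x) = 0)
  (h4m2 : forall p q (x : C p q.+2),
      d21 p.+2 q (d21 p q.+1 x) = 0) :
  let C1 := (C 1%N 0%N * C 0%N 1%N)%type in
  (* total complex in degree 1 *)
  let Z1C : C1 -> Prop := fun z =>
      [/\ d10 1%N 0%N z.1 + d21 0%N 0%N z.2 = 0,
          d01 1%N 0%N z.1 + d10 0%N 1%N z.2 = 0 &
          d01 0%N 1%N z.2 = 0] in
  let B1C : C1 -> Prop := fun z =>
      exists x : C 0%N 0%N, z = (d10 0%N 0%N x, d01 0%N 0%N x) in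
  (* the subcomplex N_0, with differential d10 *)
  let Z1N : C 1%N 0%N -> Prop := fun y =>
      d01 1%N 0%N y = 0 /\ d10 1%N 0%N y = 0 in
  let B1N : C 1%N 0%N -> Prop := fun y =>
      exists2 x : C 0%N 0%N, d01 0%N 0%N x = 0 & y = d10 0%N 0%N x in
  let B2N : C 2%N 0%N -> Prop := fun y =>
      exists2 x : C 1%N 0%N, d01 1%N 0%N x = 0 & y = d10 1%N 0%N x in
  (* the complex (C^{0,.}, d01) *)
  let B1C0 : C 0%N 1%N -> Prop := fun y =>
      exists x : C 0%N 0%N, y = d01 0%N 0%N x in
  (* ker rho_1 : xi in A^1 with rho_1(xi) = 0 in H^2(N_0) *)
  let kerrho1 : C 0%N 1%N -> Prop := fun xi =>
      exists eta10 : C 1%N 0%N,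
        [/\ d01 1%N 0%N eta10 + d10 0%N 1%N xi = 0,
            d01 0%N 1%N xi = 0 &
            B2N (d21 0%N 0%N xi + d10 1%N 0%N eta10)] in
  [/\ subquot_iso B1C (@zero_sub R _)
        (dsum_sub B1N B1C0) (@zero_sub R _),
      subquot_iso Z1C (@zero_sub R _)
        (dsum_sub Z1N kerrho1) (@zero_sub R _) &
      subquot_iso Z1C B1C
        (dsum_sub Z1N kerrho1) (dsum_sub B1N B1C0)].
Proof.
move=> C1 Z1C B1C Z1N B1N B2N B1C0 kerrho1.
have Zsub : subspace Z1C := tot_Z1_subspace d21 d10 d01.
have Bsub : subspace B1C := tot_B1_subspace d10 d01.
have BZ : B1C `<=` Z1C := tot_B1_sub_Z1 h02 h11 h20_0.
have [s [sZ sB]] := ex_linear_section snd Bsub Zsub BZ.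
have -> : Z1N = ker_snd Z1C := N0_Z1E d21 d10 d01.
have -> : B1N = ker_snd B1C := N0_B1E d10 d01.
have -> : B1C0 = snd @` B1C := C0_B1E d10 d01.
have -> : kerrho1 = snd @` Z1C := ker_rho1E d21 d10 d01.
split.
- exact: subquot_iso_untwist Bsub sB.
- exact: subquot_iso_untwist Zsub sZ.
- exact: subquot_iso_dsum_sub_untwist Zsub sZ _ Bsub sB.
Qed.
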